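(* Let $\Psi$ be a forest algebra formula that only has green and yellow nodes and let $v$ be a yellow node. Let $\mathsf{lp}(v)=v_1\cdots v_k$ be the long path starting at $v$. Then $k\ge 8$ and $|\mathsf{balance}(v_i)|\ge 2$ for $1\le i\le 8$.
   Context: A forest algebra formula is a binary parse tree (inner nodes labelled by forest algebra operations, leaves by forests/contexts). $\Psi_v$ is the subformula rooted at $v$, $|\Psi_v|$ its number of leaves, $\mathsf{height}(\Psi_v)$ the maximal number of nodes on a root-to-leaf path of $\Psi_v$. For an inner node $v$, $\mathsf{balance}(v)=\mathsf{height}(\Psi_{\text{right child}})-\mathsf{height}(\Psi_{\text{left child}})$; leaves have balance $0$. Long path: $\mathsf{lp}(v)=v$ if $\mathsf{balance}(v)=0$, $v\cdot\mathsf{lp}(\text{left child of }v)$ if $\mathsf{balance}(v)<0$, $v\cdot\mathsf{lp}(\text{right child of }v)$ if $\mathsf{balance}(v)>0$. Colors ($\log$ base 2): $v$ is green if $\mathsf{height}(\Psi_v)\le10\log|\Psi_v|$, yellow if $\mathsf{height}(\Psi_v)-1\le10\log|\Psi_v|<\mathsf{height}(\Psi_v)$, red otherwise. *)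

From Stdlib Require Import Reals ZArith List.
Open Scope R_scope.

(* A forest algebra formula: a binary parse tree whose inner nodes are
   labelled by forest algebra operations (type Op) and whose leaves are
   labelled by forests/contexts (type Lf).  The lemma only concerns the
   shape of the tree, so the label types are kept abstract. *)
Inductive formula (Op Lf : Type) : Type :=
| FLeaf : Lf -> formula Op Lf
| FNode : Op -> formula Op Lf -> formula Op Lf -> formula Op Lf.
Arguments FLeaf {Op Lf} _.
Arguments FNode {Op Lf} _ _ _.

Section F.
Context {Op Lf : Type}.

Fixpoint fsize (t : formula Op Lf) : nat :=
  match t with
  | FLeaf _ => 1
  | FNode _ l r => fsize l + fsize r
  end.

Fixpoint height (t : formula Op Lf) : nat :=
  match t with
  | FLeaf _ => 1
  | FNode _ l r => S (Nat.max (height l) (height r))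
  end.

Definition is_inner (t : formula Op Lf) : Prop :=
  match t with FLeaf _ => False | FNode _ _ _ => True end.

Definition balance (t : formula Op Lf) : Z :=
  match t with
  | FLeaf _ => 0%Z
  | FNode _ l r => (Z.of_nat (height r) - Z.of_nat (height l))%Z
  end.

(* long path lp(v), as the list of the subformulas Psi_{v_1}, ..., Psi_{v_k} *)
Fixpoint lp (t : formula Op Lf) : list (formula Op Lf) :=
  match t with
  | FLeaf _ => t :: nil
  | FNode _ l r =>
      match balance t with
      | Z0 => t :: nil
      | Zneg _ => t :: lp l
      | Zpos _ => t :: lp r
      end
  end.

Definition log2 (x : R) : R := ln x / ln 2.

Definition green (t : formula Op Lf) : Prop :=
  INR (height t) <= 10 * log2 (INR (fsize t)).

Definition yellow (t : formula Op Lf) : Prop :=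
  INR (height t) - 1 <= 10 * log2 (INR (fsize t)) /\
  10 * log2 (INR (fsize t)) < INR (height t).

Definition red (t : formula Op Lf) : Prop := ~ green t /\ ~ yellow t.

Inductive subformula : formula Op Lf -> formula Op Lf -> Prop :=
| sub_refl t : subformula t t
| sub_left o l r s : subformula s l -> subformula s (FNode o l r)
| sub_right o l r s : subformula s r -> subformula s (FNode o l r).

End F.

(** Write [x = 2^(1/10)].  A node that is not red has at least [x^(h-1)]
    leaves, [h] its height, while a yellow node of height [h] has fewer than
    [x^h].  If a node with height [h] and fewer than [x^(h+k)] leaves,
    [k <= 7], had children of almost equal heights, both children would have
    at least [x^(h-3)] leaves, so the node would have at least
    [2 x^(h-3) = x^(h+7)] of them, which is impossible.  Hence the long path
    descends into the strictly taller child, of height [h-1], and the slack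
    [k] grows by one per step: starting from a yellow node ([k = 0]) this
    works for eight steps. *)

From Stdlib Require Import Reals ZArith List Lia Lra.

Lemma ln2_pos : 0 < ln 2.
Proof. pose proof ln_lt_2; lra. Qed.

Lemma log2_le (a b : R) : 0 < a -> a <= b -> log2 a <= log2 b.
Proof.
  intros Ha Hab; unfold log2; apply Rmult_le_compat_r.
  - left; apply Rinv_0_lt_compat, ln2_pos.
  - destruct Hab as [Hlt | ->]; [left; apply ln_increasing |]; lra.
Qed.

Lemma log2_double (a : R) : 0 < a -> log2 (2 * a) = 1 + log2 a.
Proof.
  intros Ha; unfold log2; rewrite ln_mult by lra.
  pose proof ln2_pos; field; lra.
Qed.

Lemma log2_add_ge_min (a b : R) :
  0 < a -> 0 < b -> 1 + Rmin (log2 a) (log2 b) <= log2 (a + b).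
Proof.
  intros Ha Hb.
  assert (Hsorted : forall a b, 0 < a -> a <= b ->
            1 + Rmin (log2 a) (log2 b) <= log2 (a + b)).
  { intros a' b' Ha' Hab.
    rewrite Rmin_left by now apply log2_le.
    rewrite <- log2_double by lra.
    apply log2_le; lra. }
  destruct (Rle_or_lt a b) as [Hab | Hba]; [now apply Hsorted |].
  rewrite Rmin_comm, (Rplus_comm a b); apply Hsorted; lra.
Qed.

Section Formulas.
Context {Op Lf : Type}.
Implicit Types (t s u : formula Op Lf).

Lemma fsize_gt0 t : 0 < INR (fsize t).
Proof. apply lt_0_INR; induction t; simpl; lia. Qed.

Lemma height_gt0 t : (1 <= height t)%nat.
Proof. destruct t; simpl; lia. Qed.

Lemma inner_of_height t : (2 <= height t)%nat -> is_inner t.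
Proof. destruct t; simpl; [lia | trivial]. Qed.

Lemma subformula_trans s t u :
  subformula s t -> subformula t u -> subformula s u.
Proof. intros Hst Htu; induction Htu; auto using subformula. Qed.

Lemma fsize_subformula s t : subformula s t -> (fsize s <= fsize t)%nat.
Proof. induction 1; simpl; lia. Qed.

Definition nonred t : Prop :=
  INR (height t) - 1 <= 10 * log2 (INR (fsize t)).

Lemma green_or_yellow_nonred t : green t \/ yellow t -> nonred t.
Proof. unfold green, yellow, nonred; lra. Qed.

Lemma yellow_log2_lt t : yellow t -> 10 * log2 (INR (fsize t)) < INR (height t).
Proof. now intros [_ Hlt]. Qed.

Lemma balanced_node_log2_ge o l r :
  nonred l -> nonred r -> (Z.abs (balance (FNode o l r)) <= 1)%Z ->
  INR (height (FNode o l r)) + 7 <= 10 * log2 (INR (fsize (FNode o l r))).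
Proof.
  unfold nonred; cbn [balance height fsize]; intros Hl Hr Hbal.
  set (m := Nat.min (height l) (height r)).
  assert (Hh : (S (Nat.max (height l) (height r)) <= m + 2)%nat) by lia.
  assert (Hml : (m <= height l)%nat) by lia.
  assert (Hmr : (m <= height r)%nat) by lia.
  apply le_INR in Hh, Hml, Hmr; rewrite plus_INR in Hh; simpl (INR 2) in Hh.
  rewrite plus_INR.
  pose proof (log2_add_ge_min _ _ (fsize_gt0 l) (fsize_gt0 r)) as Hadd.
  assert (Hmin : INR m - 1 <= 10 * Rmin (log2 (INR (fsize l))) (log2 (INR (fsize r)))).
  { apply Rmin_case; lra. }
  lra.
Qed.

Lemma lp_unbalanced t :
  (2 <= Z.abs (balance t))%Z ->
  exists c, lp t = t :: lp c /\ subformula c t /\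
            height t = S (height c) /\ (3 <= height t)%nat.
Proof.
  destruct t as [| o l r]; simpl; [lia |]; intros Hbal.
  pose proof (height_gt0 l); pose proof (height_gt0 r).
  destruct (Z.of_nat (height r) - Z.of_nat (height l))%Z eqn:E; [lia | |].
  - exists r; repeat split; auto using subformula; lia.
  - exists l; repeat split; auto using subformula; lia.
Qed.

Section LongPath.
Variable Psi : formula Op Lf.
Hypothesis Psi_nonred : forall w, subformula w Psi -> nonred w.

Lemma small_node_unbalanced t (k : nat) :
  (k <= 7)%nat -> subformula t Psi -> is_inner t ->
  10 * log2 (INR (fsize t)) < INR (height t) + INR k ->
  (2 <= Z.abs (balance t))%Z.
Proof.
  destruct t as [| o l r]; [contradiction |]; intros Hk Ht _ Hsmall.
  destruct (Z_le_gt_dec 2 (Z.abs (balance (FNode o l r)))) as [| Hbal]; [easy |].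
  exfalso.
  apply le_INR in Hk; simpl (INR 7) in Hk.
  enough (INR (height (FNode o l r)) + 7 <= 10 * log2 (INR (fsize (FNode o l r))))
    by lra.
  apply balanced_node_log2_ge; [| | lia]; apply Psi_nonred;
    apply subformula_trans with (FNode o l r); auto using subformula.
Qed.

Lemma long_path_unbalanced_prefix (j : nat) : forall (k : nat) t,
  (j + k <= 8)%nat -> subformula t Psi -> is_inner t ->
  10 * log2 (INR (fsize t)) < INR (height t) + INR k ->
  (j <= length (lp t))%nat /\
  (forall i d, (i < j)%nat -> (2 <= Z.abs (balance (nth i (lp t) d)))%Z).
Proof.
  induction j as [| j IH]; intros k t Hjk Ht Hinner Hsmall; [split; lia |].
  assert (Hbal : (2 <= Z.abs (balance t))%Z)
    by (apply (small_node_unbalanced t k); auto; lia).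
  destruct (lp_unbalanced t Hbal) as (c & Hlp & Hct & Hhc & Hht).
  assert (Hc : subformula c Psi) by now apply subformula_trans with t.
  assert (Hcsmall : 10 * log2 (INR (fsize c)) < INR (height c) + INR (S k)).
  { assert (log2 (INR (fsize c)) <= log2 (INR (fsize t)))
      by (apply log2_le; [apply fsize_gt0 | apply le_INR, fsize_subformula; auto]).
    rewrite Hhc, S_INR in Hsmall; rewrite S_INR; lra. }
  destruct (IH (S k) c) as [Hlen Hprefix]; auto; [lia | apply inner_of_height; lia |].
  rewrite Hlp; split; [simpl; lia |].
  intros [| i] d Hi; [easy |]; apply Hprefix; lia.
Qed.

End LongPath.
End Formulas.

Theorem lemma3p10 (Op Lf : Type) (Psi v : formula Op Lf) :
  (forall w, subformula w Psi -> green w \/ yellow w) ->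
  subformula v Psi -> is_inner v -> yellow v ->
  (8 <= length (lp v))%nat /\
  (forall i, (i < 8)%nat -> (2 <= Z.abs (balance (nth i (lp v) v)))%Z).
Proof.
  intros HPsi Hv Hinner Hyellow.
  assert (HPsi_nonred : forall w, subformula w Psi -> nonred w)
    by (intros w Hw; apply green_or_yellow_nonred, HPsi, Hw).
  assert (Hsmall : 10 * log2 (INR (fsize v)) < INR (height v) + INR 0)
    by (simpl; rewrite Rplus_0_r; now apply yellow_log2_lt).
  destruct (long_path_unbalanced_prefix Psi HPsi_nonred 8 0 v) as [Hlen Hprefix];
    auto.
Qed.
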